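(* Let $a<b$ be real numbers and let $h:[a,b)\to\mathbb{R}$ be an increasing function such that $$C:=\overline{\lim_{x\to a}}\operatorname{ess}\frac{h(x)-h(a)}{(x-a)\,h'(x)}<\infty.$$ Then for every $q\in(0,1)$, $$\varlimsup_{x\to a}\frac{h(a+q(x-a))-h(a)}{h(x)-h(a)}\ \leq\ q^{1/C}.$$
   Context: An increasing function is differentiable almost everywhere, so $h'(x)$ is defined for almost all $x$. For a function $f:[a,b)\to\mathbb{R}$ (defined almost everywhere), the essential upper limit $\overline{\lim_{x\to a}}\operatorname{ess} f(x)$ is the greatest lower bound of the numbers $t\in\mathbb{R}$ such that $f(x)\le t$ for almost all $x$ in some interval $[a,\delta]\subset[a,b)$. Limits at $a$ are right-hand limits. *)

From HB Require Import structures.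
From mathcomp Require Import all_boot all_order all_algebra.
From mathcomp Require Import all_classical all_reals all_analysis.
Set Implicit Arguments. Unset Strict Implicit. Unset Printing Implicit Defensive.
Import Order.TTheory GRing.Theory Num.Theory.
Import numFieldNormedType.Exports.
Local Open Scope classical_set_scope.
Local Open Scope ring_scope.

(* The quotient (h x - h a) / ((x - a) h'(x)) as an extended real, with the
   conventions c/0 = +oo for c > 0 and 0/0 = 0 (only relevant where
   h'(x) = 0; numerator is >= 0 for increasing h and x >= a). *)
Definition dratio (R : realType) (h : R -> R) (a x : R) : \bar R :=
  let num := h x - h a in
  let den := (x - a) * derive1 h x in
  if den == 0 then (if num == 0 then 0%E else +oo%E) else (num / den)%:E.

(* Essential upper limit at a (from the right) of
   x |-> (h x - h a) / ((x - a) h'(x)), this function being defined at the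
   points x where h is differentiable:  the infimum of the real numbers t
   such that, for some delta with [a, delta] included in [a, b),
   for almost every x in [a, delta], h is differentiable at x and
   dratio h a x <= t.  (inf of the empty set is +oo.) *)
Definition ess_limsup_dratio (R : realType) (h : R -> R) (a b : R) : \bar R :=
  ereal_inf [set t%:E | t in [set t : R | exists2 d : R, a < d < b &
     {ae (@lebesgue_measure R), forall x, x \in `[a, d] ->
        derivable h x 1 /\ (dratio h a x <= t%:E)%E}]].

Definition limsup_right (R : realType) (g : R -> R) (a : R) : \bar R :=
  limf_esup (fun x => (g x)%:E) (a^'+).

(* q ^ (1 / C) for C in [0, +oo], 0 < q < 1, with q^(1/0) = q^(+oo) = 0
   and q^(1/+oo) = q^0 = 1. *)
Definition qpow_inv (R : realType) (q : R) (C : \bar R) : \bar R :=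
  match C with
  | r%:E => if r <= 0 then 0%E else (q `^ r^-1)%:E
  | +oo%E => 1%E
  | -oo%E => 0%E
  end.

From HB Require Import structures.
From mathcomp Require Import all_boot all_order all_algebra.
From mathcomp Require Import all_classical all_reals all_analysis.
From mathcomp Require Import ring lra measurable_realfun.
Import Order.TTheory GRing.Theory Num.Theory.
Import numFieldNormedType.Exports.
Local Open Scope classical_set_scope.
Local Open Scope ring_scope.

(** Take t > C. For almost every y close to a, h y - h a <= t (y - a) h'(y), so
    F y = ln (h y - h a) - ln (y - a) / t has a nonnegative derivative almost
    everywhere; moreover ln (h y - h a) is nondecreasing, so away from a the
    function F drops at most at a linear rate.  These two facts force F to be
    nondecreasing: cover the exceptional null set by an open set of small
    measure, whose cumulative mass absorbs the drops, and conclude by real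
    induction.  Then F (a + q (x - a)) <= F x reads
    h (a + q (x - a)) - h a <= q ^ (1/t) (h x - h a), and t decreases to C. *)

Section real_monotonicity.
Set Implicit Arguments.
Unset Strict Implicit.
Variable R : realType.
Local Notation mu := (@lebesgue_measure R).

Lemma is_derive_right_bounds (f : R -> R) (x l e : R) :
  is_derive x 1 f l -> 0 < e ->
  exists2 r0, 0 < r0 & forall r, x < r < x + r0 ->
    (l - e) * (r - x) <= f r - f x <= (l + e) * (r - x).
Proof.
move=> [df dfl] e0.
have := (cvgrPdist_lt _ _).1 df e e0.
rewrite -/(derive f x 1) dfl => /(_ _) /nbhs_ballP[r0 /= r00 near_x].
exists r0 => // r /andP[xr rx].
have rx0 : 0 < r - x by rewrite subr_gt0.
have rx_ball : ball 0 r0 (r - x).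
  by rewrite /ball /= sub0r normrN ger0_norm ?ltW // ltrBlDl.
have := near_x _ rx_ball (lt0r_neq0 rx0).
rewrite /= scaler1 subrK => dist_lt.
have lo : l - (r - x)^-1 * (f r - f x) < e := le_lt_trans (ler_norm _) dist_lt.
have hi : (r - x)^-1 * (f r - f x) - l < e.
  by apply: le_lt_trans dist_lt; rewrite distrC ler_norm.
move: lo hi; rewrite ltrBlDr -ltrBlDl => lo; rewrite ltrBlDr => hi.
apply/andP; split; first by rewrite -ler_pdivlMr // mulrC ltW.
by rewrite -ler_pdivrMr // mulrC [l + e]addrC ltW.
Qed.

Lemma derive1_ge0_right (f : R -> R) (x d : R) : 0 < d ->
  (forall r, x < r < x + d -> f x <= f r) -> derivable f x 1 -> 0 <= derive1 f x.
Proof.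
move=> d0 fx_le dfx; set l := derive1 f x; rewrite leNgt; apply/negP => l0.
have dl : is_derive x 1 f l by rewrite /l derive1E; exact: derivableP.
have e0 : 0 < - l / 2 by rewrite divr_gt0 // oppr_gt0.
have [r0 r00 bounds] := is_derive_right_bounds dl e0.
pose r := x + Num.min r0 d / 2.
have m0 : 0 < Num.min r0 d by rewrite lt_min r00 d0.
have m1 : Num.min r0 d <= r0 by rewrite ge_min lexx.
have m2 : Num.min r0 d <= d by rewrite ge_min lexx orbT.
have xr : x < r < x + r0 by rewrite /r; apply/andP; split; lra.
have /andP[_ upper] := bounds r xr.
have : (l + - l / 2) * (r - x) < 0.
  by rewrite pmulr_llt0 ?subr_gt0; [lra | case/andP: xr].
have xrd : x < r < x + d by rewrite /r; apply/andP; split; lra.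
have := fx_le r xrd; lra.
Qed.

Lemma right_dini_of_derive_ge0 (F : R -> R) (y l e : R) :
  is_derive y 1 F l -> 0 <= l -> 0 < e ->
  exists2 r0, 0 < r0 & forall r, y < r < y + r0 -> F y - e * (r - y) <= F r.
Proof.
move=> dF l0 e0; have [r0 r00 bounds] := is_derive_right_bounds dF e0.
exists r0 => // r yr; have /andP[lower _] := bounds r yr.
have : 0 <= l * (r - y) by rewrite mulr_ge0 // subr_ge0; case/andP: yr => /ltW.
by rewrite mulrBl in lower; lra.
Qed.

Lemma lower_bound_right_end (P : R -> R) (u m K c : R) : u < m ->
  (forall r, u <= r < m -> c <= P r) ->
  (forall r, u <= r < m -> P r + K * r <= P m + K * m) -> c <= P m.
Proof.
move=> um cP PK; apply/ler_addgt0Pr => eta eta0.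
pose k := `|K| + 1.
have k0 : 0 < k by rewrite ltr_wpDl.
pose r := Num.max u (m - eta / k).
have urm : u <= r < m.
  by rewrite le_max lexx gt_max um /= ltrBlDr ltrDl divr_gt0.
have mr : k * (m - r) <= eta.
  have : m - eta / k <= r by rewrite le_max lexx orbT.
  by rewrite -ler_pdivlMl //; lra.
have Kk : K * (m - r) <= k * (m - r).
  by rewrite ler_wpM2r ?subr_ge0 ?(ltW urm.2) // /k; have := ler_norm K; lra.
have := cP r urm; have := PK r urm; rewrite mulrBr in Kk; lra.
Qed.

Lemma real_induction_le (P : R -> R) (u v K : R) : u <= v ->
  (forall y1 y2, u <= y1 -> y1 <= y2 -> y2 <= v -> P y1 + K * y1 <= P y2 + K * y2) ->
  (forall y, u <= y -> y < v ->
     exists2 r0, 0 < r0 & forall r, y < r < y + r0 -> P y <= P r) ->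
  P u <= P v.
Proof.
move=> uv PK Pright.
pose A := [set s | u <= s <= v /\ forall r, u <= r <= s -> P u <= P r].
have Au : A u.
  split; first by rewrite lexx uv.
  by move=> r /andP[ur ru]; rewrite (@le_anti _ _ r u) ?ur ?ru.
have supA : has_sup A by split; [exists u | exists v => s [/andP[_ ->]]].
set m := sup A.
have um : u <= m by apply: sup_upper_bound.
have mv : m <= v by apply: ge_sup; [exists u | move=> s [/andP[_ ->]]].
have below_m r : u <= r < m -> P u <= P r.
  move=> /andP[ur rm].
  have mr0 : 0 < m - r by rewrite subr_gt0.
  have [s [_ As] ms] := sup_adherent mr0 supA.
  by apply: As; rewrite ur /= ltW //; move: ms; rewrite opprB addrCA subrr addr0.
have Pm : P u <= P m.
  have [<-//|um'] := eqVneq u m.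
  apply: (lower_bound_right_end (K := K) (u := u)) below_m _.
    by rewrite lt_neqAle um' um.
  by move=> r /andP[ur rm]; apply: PK ur (ltW rm) mv.
have Am : A m.
  split => [|r /andP[ur rm]]; first by rewrite um mv.
  have [->//|rm'] := eqVneq r m.
  by apply: below_m; rewrite ur lt_neqAle rm' rm.
suff <- : m = v by apply: Am.2; rewrite um lexx.
apply/eqP; rewrite eq_le mv leNgt; apply/negP => mv'.
have [r0 r00 Pm_right] := Pright m um mv'.
pose s := Num.min (m + r0 / 2) v.
have ms : m < s by rewrite /s lt_min mv' ltrDl divr_gt0.
have As : A s.
  split; first by rewrite (le_trans um (ltW ms)) /s ge_min lexx orbT.
  move=> r /andP[ur rs]; have [rm|mr] := leP r m; first by apply: Am.2; rewrite ur rm.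
  apply: (le_trans Pm); apply: Pm_right; rewrite mr /=.
  by apply: (le_lt_trans rs); rewrite /s gt_min ltrD2l ltr_pdivrMr // ltr_pMr // ltr1n.
by have := sup_upper_bound supA As; rewrite leNgt ms.
Qed.

Lemma null_set_open_cover (N : set R) (d : R) : measurable N -> mu N = 0%E -> 0 < d ->
  exists U : set R, [/\ open U, N `<=` U & (mu U <= d%:E)%E].
Proof.
move=> mN N0 d0.
have Nfin : (mu N < +oo)%E by rewrite N0.
have [U [oU NU UN]] := lebesgue_regularity_outer mN Nfin d0.
exists U; split => //.
have mU : measurable U := open_measurable oU.
apply: (le_trans (@le_measure _ _ _ mu U ((U `\` N) `|` N) _ _ _)).
- by rewrite inE.
- by rewrite inE; apply: measurableU => //; apply: measurableD.
- by move=> x Ux; have [Nx|nNx] := pselect (N x); [right|left].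
apply: (le_trans (measureU2 _ _ _)) => //; first exact: measurableD.
by move: N0 => /= ->; rewrite adde0 ltW.
Qed.

Section cumulative_mass.
Variables (U : set R) (u : R).
Hypotheses (oU : open U) (finU : (mu U < +oo)%E).

Definition cumul_mass (s : R) : R := fine (mu (U `&` `[u, s])).

Let mU : measurable U := open_measurable oU.

Lemma cumul_massE s : (cumul_mass s)%:E = mu (U `&` `[u, s]).
Proof.
rewrite fineK // ge0_fin_numE //.
by apply: le_lt_trans finU; apply: le_measure; rewrite ?inE //; apply: measurableI.
Qed.

Lemma cumul_mass_ge0 s : 0 <= cumul_mass s.
Proof. by rewrite -lee_fin cumul_massE. Qed.

Lemma cumul_mass_le s : ((cumul_mass s)%:E <= mu U)%E.
Proof.
by rewrite cumul_massE; apply: le_measure; rewrite ?inE //; apply: measurableI.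
Qed.

Lemma le_cumul_mass s1 s2 : s1 <= s2 -> cumul_mass s1 <= cumul_mass s2.
Proof.
move=> s12; rewrite -lee_fin !cumul_massE.
apply: le_measure; rewrite ?inE //; try by apply: measurableI.
by move=> x [Ux] /=; rewrite !in_itv /= => /andP[-> xs]; split=> //; exact: le_trans s12.
Qed.

Lemma cumul_mass_right_growth y : u <= y -> U y ->
  exists2 r0, 0 < r0 & forall r, y < r < y + r0 -> cumul_mass y + (r - y) <= cumul_mass r.
Proof.
move=> uy Uy; have : nbhs y U by apply: open_nbhs_nbhs.
move=> /nbhs_ballP[r0 /= r00 ballU]; exists r0 => // r /andP[yr ry].
have mI s : measurable (U `&` `[u, s]) by apply: measurableI.
have yr_len : (r - y)%:E = mu `]y, r] by rewrite lebesgue_measure_itv /= lte_fin yr EFinB.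
have disj : U `&` `[u, y] `&` `]y, r] = set0.
  rewrite -subset0 => x [[_ /=]]; rewrite !in_itv /= => /andP[_ xy] /andP[yx _].
  by move: (lt_le_trans yx xy); rewrite ltxx.
rewrite -lee_fin EFinD !cumul_massE yr_len -(measureU mu (mI y) _ disj) //.
apply: le_measure; rewrite ?inE //; try exact: mI.
  by apply: measurableU => //; exact: mI.
move=> x [[Ux]|] /=; rewrite !in_itv /=.
  by move=> /andP[-> xy]; split => //; rewrite (le_trans xy (ltW yr)).
move=> /andP[yx xr]; split; last by rewrite xr (le_trans uy (ltW yx)).
apply: ballU; rewrite /ball /= distrC ger0_norm ?subr_ge0 ?ltW //.
by rewrite ltrBlDl (le_lt_trans xr).
Qed.

End cumulative_mass.

Lemma le_of_right_dini_off_open (F : R -> R) (U : set R) (u v K eta : R) :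
  open U -> (mu U < +oo)%E -> u <= v -> 0 <= eta ->
  (forall y1 y2, u <= y1 -> y1 <= y2 -> y2 <= v -> F y1 + K * y1 <= F y2 + K * y2) ->
  (forall y, u <= y -> y < v -> ~ U y ->
     exists2 r0, 0 < r0 & forall r, y < r < y + r0 -> F y - eta * (r - y) <= F r) ->
  F u <= F v + (`|K| + 1) * cumul_mass U u v + eta * (v - u).
Proof.
move=> oU finU uv eta0 FK Fright.
pose k := `|K| + 1.
have k0 : 0 < k by rewrite ltr_wpDl.
have Kk : K <= k by rewrite /k; have := ler_norm K; lra.
pose lam := cumul_mass U u.
have lam_mono := le_cumul_mass u oU finU.
(* On U the cumulative mass grows at rate 1 and outweighs the drop of F, of rate at most K. *)
pose P s := F s + k * lam s + eta * s.
suff : P u <= P v.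
  have : 0 <= k * lam u by apply: mulr_ge0; [exact: ltW | exact: cumul_mass_ge0].
  by rewrite /P /k /lam; lra.
apply: (real_induction_le (K := K)) => // [y1 y2 uy1 y12 y2v | y uy yv].
  have := FK _ _ uy1 y12 y2v.
  have : k * lam y1 <= k * lam y2 by rewrite ler_pM2l // lam_mono.
  have : eta * y1 <= eta * y2 by rewrite ler_wpM2l.
  by rewrite /P; lra.
have [Uy|nUy] := pselect (U y); last first.
  have [r0 r00 Fr] := Fright y uy yv nUy.
  exists r0 => // r yr; have := Fr r yr.
  have : k * lam y <= k * lam r by rewrite ler_pM2l // lam_mono //; case/andP: yr => /ltW.
  by rewrite /P; lra.
have [r0 r00 lam_growth] := cumul_mass_right_growth oU finU uy Uy.
exists (Num.min r0 (v - y)); first by rewrite lt_min r00 subr_gt0.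
move=> r /andP[yr]; rewrite -ltrBlDl lt_min => /andP[ry rv].
have rv' : r <= v by move: rv; rewrite ltrD2r => /ltW.
have := FK _ _ uy (ltW yr) rv'.
have : k * (lam y + (r - y)) <= k * lam r by rewrite ler_pM2l // lam_growth // yr -ltrBlDl.
have : K * (r - y) <= k * (r - y) by rewrite ler_wpM2r // subr_ge0 ltW.
have : eta * y <= eta * r by rewrite ler_wpM2l // ltW.
by rewrite /P; lra.
Qed.

Lemma le_of_right_dini_ae (F : R -> R) (u v K : R) (N : set R) : u <= v ->
  measurable N -> mu N = 0%E ->
  (forall y1 y2, u <= y1 -> y1 <= y2 -> y2 <= v -> F y1 + K * y1 <= F y2 + K * y2) ->
  (forall y, u <= y -> y < v -> ~ N y -> forall e, 0 < e ->
     exists2 r0, 0 < r0 & forall r, y < r < y + r0 -> F y - e * (r - y) <= F r) ->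
  F u <= F v.
Proof.
move=> uv mN N0 FK Fright; apply/ler_addgt0Pr => eps eps0.
pose k := `|K| + 1.
have k0 : 0 < k by rewrite ltr_wpDl.
have d0 : 0 < eps / (2 * k) by rewrite divr_gt0 // mulr_gt0.
have [U [oU NU muU]] := null_set_open_cover mN N0 d0.
have finU : (mu U < +oo)%E by apply: le_lt_trans muU (ltry _).
pose eta := eps / (2 * (v - u + 1)).
have eta0 : 0 < eta by rewrite divr_gt0 // mulr_gt0 //; lra.
have Fright_U y : u <= y -> y < v -> ~ U y ->
    exists2 r0, 0 < r0 & forall r, y < r < y + r0 -> F y - eta * (r - y) <= F r.
  by move=> uy yv nUy; apply: Fright => // Ny; apply/nUy/NU.
have := le_of_right_dini_off_open oU finU uv (ltW eta0) FK Fright_U.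
have : k * cumul_mass U u v <= eps / 2.
  have : ((cumul_mass U u v)%:E <= (eps / (2 * k))%:E)%E.
    exact: le_trans (cumul_mass_le u oU finU v) muU.
  have kd : k * (eps / (2 * k)) = eps / 2 by field; rewrite gt_eqF.
  by rewrite lee_fin -(ler_pM2l k0) kd.
have : eta * (v - u) <= eps / 2.
  have <- : eta * (v - u + 1) = eps / 2 by rewrite /eta; field; rewrite gt_eqF //; lra.
  by rewrite ler_pM2l //; lra.
by rewrite /k; lra.
Qed.

End real_monotonicity.

Section increment_ratio.
Set Implicit Arguments.
Unset Strict Implicit.
Variable R : realType.
Local Notation mu := (@lebesgue_measure R).

Lemma ln_sub_le (c y1 y2 : R) : 0 < c -> c <= y1 -> y1 <= y2 ->
  ln y2 - ln y1 <= (y2 - y1) / c.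
Proof.
move=> c0 cy1 y12; have y10 := lt_le_trans c0 cy1.
have y21 : 0 <= (y2 - y1) / y1 by rewrite divr_ge0 ?subr_ge0 // ltW.
rewrite -ln_div ?posrE ?(lt_le_trans y10 y12) //.
have -> : y2 / y1 = 1 + (y2 - y1) / y1 by field; rewrite gt_eqF.
apply: (le_trans (le_ln1Dx _)); first by apply: lt_le_trans y21; rewrite ltrN10.
by rewrite ler_wpM2l ?subr_ge0 // lef_pV2 ?posrE.
Qed.

Lemma is_derive_log_increment (h : R -> R) (a c y : R) :
  derivable h y 1 -> 0 < h y - h a -> a < y ->
  is_derive y 1 (fun z => ln (h z - h a) - c * ln (z - a))
    ((h y - h a)^-1 * derive1 h y - c * (y - a)^-1).
Proof.
move=> dh hy ay.
have dH : is_derive y 1 (fun z => h z - h a) (derive1 h y).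
  by have := is_deriveB (derivableP dh) (is_derive_cst (h a) y 1); rewrite subr0 derive1E.
have dZ : is_derive y 1 (fun z => z - a) 1.
  by have := is_deriveB (@is_derive_id _ _ y 1) (is_derive_cst a y 1); rewrite subr0.
have ya : 0 < y - a by rewrite subr_gt0.
have dlnH := @is_derive1_comp R (@ln R) (fun z => h z - h a) y _ _ (is_derive1_ln hy) dH.
have dlnZ := @is_derive1_comp R (@ln R) (fun z => z - a) y _ _ (is_derive1_ln ya) dZ.
by have := is_deriveB dlnH (is_deriveZ c dlnZ); rewrite mulr1.
Qed.

Lemma log_increment_derive_ge0 (h : R -> R) (a t y : R) :
  0 < t -> a < y -> 0 < h y - h a -> h y - h a <= t * ((y - a) * derive1 h y) ->
  0 <= (h y - h a)^-1 * derive1 h y - t^-1 * (y - a)^-1.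
Proof.
move=> t0 ay hy hyt; have ya : 0 < y - a by rewrite subr_gt0.
have -> : (h y - h a)^-1 * derive1 h y - t^-1 * (y - a)^-1 =
    (t * ((y - a) * derive1 h y) - (h y - h a)) / ((h y - h a) * t * (y - a)).
  by field; rewrite !gt_eqF.
by rewrite divr_ge0 ?subr_ge0 // !mulr_ge0 // ltW.
Qed.

Lemma increment_le_powR (h : R -> R) (a t q x : R) (N : set R) :
  0 < t -> 0 < q < 1 -> a < x ->
  {in `[a, x] &, {homo h : y z / y <= z}} ->
  measurable N -> mu N = 0%E ->
  (forall y, a < y -> y <= x -> ~ N y ->
     derivable h y 1 /\ h y - h a <= t * ((y - a) * derive1 h y)) ->
  h (a + q * (x - a)) - h a <= q `^ t^-1 * (h x - h a).
Proof.
move=> t0 /andP[q0 q1] ax hm mN N0 hd.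
set u := a + q * (x - a).
have uaq : u - a = q * (x - a) by rewrite /u addrAC subrr add0r.
have xa : 0 < x - a by rewrite subr_gt0.
have ti0 : 0 <= t^-1 by rewrite invr_ge0 ltW.
have ua : 0 < u - a by rewrite uaq mulr_gt0.
have ux : u < x.
  have : q * (x - a) < 1 * (x - a) by rewrite ltr_pM2r.
  rewrite /u; lra.
have in_ax y : a <= y -> y <= x -> y \in `[a, x] by move=> ay yx; rewrite in_itv /= ay yx.
have hxa : 0 <= h x - h a by rewrite subr_ge0 hm ?in_ax ?lexx ?(ltW ax).
have [hu0|hu0] := leP (h u - h a) 0.
  by apply: (le_trans hu0); rewrite mulr_ge0 ?powR_ge0.
have hmon y1 y2 : u <= y1 -> y1 <= y2 -> y2 <= x -> h y1 <= h y2.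
  by move=> uy1 y12 y2x; apply: hm => //; apply: in_ax; lra.
have hpos y : u <= y -> y <= x -> 0 < h y - h a.
  by move=> uy yx; apply: (lt_le_trans hu0); rewrite lerD2r hmon.
pose F y := ln (h y - h a) - t^-1 * ln (y - a).
have : F u <= F x.
  apply: (le_of_right_dini_ae (K := t^-1 / (u - a)) (ltW ux) mN N0).
    move=> y1 y2 uy1 y12 y2x.
    have : ln (h y1 - h a) <= ln (h y2 - h a).
      by rewrite ler_ln ?posrE ?hpos ?lerD2r ?hmon //; lra.
    have : ln (y2 - a) - ln (y1 - a) <= (y2 - y1) / (u - a).
      have -> : y2 - y1 = (y2 - a) - (y1 - a) by ring.
      by apply: ln_sub_le; lra.
    move/(ler_wpM2l ti0).
    rewrite /F; lra.
  move=> y uy yx nNy e e0.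
  have ay : a < y by lra.
  have [dh hyt] := hd y ay (ltW yx) nNy.
  have hy := hpos y uy (ltW yx).
  exact: right_dini_of_derive_ge0 (is_derive_log_increment _ dh hy ay)
    (log_increment_derive_ge0 t0 ay hy hyt) e0.
rewrite /F uaq lnM ?posrE ?mulr_gt0 // mulrDr => Fux.
rewrite -(lnK (hpos u (lexx u) (ltW ux))) -(lnK (hpos x (ltW ux) (lexx x))) ?posrE //.
by rewrite /powR gt_eqF // -expRD ler_expR; lra.
Qed.

Lemma dratio_le_bound (h : R -> R) (a y t : R) : 0 <= (y - a) * derive1 h y ->
  (dratio h a y <= t%:E)%E -> h y - h a <= t * ((y - a) * derive1 h y).
Proof.
rewrite /dratio => den0; case: eqP => [->|/eqP den].
  by case: eqP => [-> _|_]; rewrite ?mulr0 // leye_eq.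
by rewrite lee_fin ler_pdivrMr // lt_neqAle eq_sym den.
Qed.

Lemma ess_limsup_dratio_lt (h : R -> R) (a b s : R) :
  {in `[a, b[ &, {homo h : x y / x <= y}} -> (ess_limsup_dratio h a b < s%:E)%E ->
  exists d N, [/\ a < d < b, measurable N, mu N = 0%E &
    forall y, a < y -> y <= d -> ~ N y ->
      derivable h y 1 /\ h y - h a <= s * ((y - a) * derive1 h y)].
Proof.
move=> hm /ereal_inf_lt[_ [t [d /andP[ad db] [N [mN N0 dN]]] <-]].
rewrite lte_fin => ts; exists d, N; split => // [|y ay yd nNy]; first by rewrite ad db.
have [dh dr] : derivable h y 1 /\ (dratio h a y <= t%:E)%E.
  have [Py|nPy] := pselect (y \in `[a, d] -> derivable h y 1 /\ (dratio h a y <= t%:E)%E).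
    by apply: Py; rewrite in_itv /= ltW.
  by case: nNy; apply: dN.
split => //.
have in_ab z : a <= z -> z < b -> z \in `[a, b[ by move=> az zb; rewrite in_itv /= az zb.
have hd0 : 0 <= derive1 h y.
  apply: (@derive1_ge0_right _ _ _ (b - y)) => // [|r /andP[yr rb]]; first by rewrite subr_gt0; lra.
  by apply: hm; rewrite ?in_ab ?ltW //; lra.
have den0 : 0 <= (y - a) * derive1 h y by rewrite mulr_ge0 // subr_ge0 ltW.
by apply: (le_trans (dratio_le_bound den0 dr)); rewrite ler_wpM2r // ltW.
Qed.

Lemma limsup_right_le (g : R -> R) (a d c : R) : a < d ->
  (forall x, a < x < d -> g x <= c) -> (limsup_right g a <= c%:E)%E.
Proof.
move=> ad gc; rewrite /limsup_right /limf_esup.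
apply: (le_trans (ereal_inf_lbound _)).
  exists [set x | a < x < d]; last by reflexivity.
  near=> x; apply/andP; split; near: x; [exact: nbhs_right_gt | exact: nbhs_right_lt].
by apply: ge_ereal_sup => _ [x xad <-]; rewrite lee_fin gc.
Unshelve. all: end_near.
Qed.

Lemma limsup_increment_ratio_le (h : R -> R) (a b s q : R) :
  {in `[a, b[ &, {homo h : x y / x <= y}} -> 0 < s -> 0 < q < 1 ->
  (ess_limsup_dratio h a b < s%:E)%E ->
  (limsup_right (fun x => ((h (a + q * (x - a)) - h a) / (h x - h a))%R) a
     <= (q `^ s^-1)%:E)%E.
Proof.
move=> hm s0 q01 /(ess_limsup_dratio_lt hm)[d [N [/andP[ad db] mN N0 dN]]].
apply: (limsup_right_le ad) => x /andP[ax xd].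
have hmx : {in `[a, x] &, {homo h : y z / y <= z}}.
  move=> y z; rewrite !in_itv /= => /andP[ay yx] /andP[az zx] yz.
  by apply: hm; rewrite // in_itv /=; apply/andP; split; lra.
have [->|hx0] := eqVneq (h x - h a) 0; first by rewrite invr0 mulr0 powR_ge0.
have hxa : 0 < h x - h a.
  by rewrite lt_neqAle eq_sym hx0 subr_ge0 hmx ?in_itv /= ?lexx ?(ltW ax).
rewrite ler_pdivrMr //; apply: (increment_le_powR s0 q01 ax hmx mN N0).
by move=> y ay yx; apply: dN => //; lra.
Qed.

Lemma powR_inv_ln_div (q e : R) : 0 < q < 1 -> 0 < e < 1 ->
  0 < ln q / ln e /\ q `^ (ln q / ln e)^-1 = e.
Proof.
move=> /andP[q0 q1] /andP[e0 e1].
have lq : ln q < 0 by rewrite ln_lt0 // q0.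
have le : ln e < 0 by rewrite ln_lt0 // e0.
split; first by rewrite -mulrNN -invrN divr_gt0 // oppr_gt0.
rewrite /powR gt_eqF // invf_div mulfVK ?lt_eqF //.
by rewrite lnK // posrE.
Qed.

Lemma exists_powR_inv_le (q c e : R) : 0 < q < 1 -> 0 < e ->
  c <= 0 \/ q `^ c^-1 < e -> exists2 s, 0 < s /\ c < s & q `^ s^-1 <= e.
Proof.
move=> q01 e0 ce; have /andP[q0 q1] := q01.
have [e1|e1] := leP 1 e.
  exists (`|c| + 1); first by split; [rewrite ltr_wpDl | have := ler_norm c; lra].
  apply/ltW/(lt_le_trans _ e1).
  by rewrite /powR gt_eqF // expR_lt1 pmulr_rlt0 ?invr_gt0 ?ltr_wpDl // ln_lt0 // q0.
have e01 : 0 < e < 1 by rewrite e0 e1.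
have [s0 qs] := powR_inv_ln_div q01 e01.
exists (ln q / ln e); last by rewrite qs.
split => //; have [c0|c0] := leP c 0; first exact: le_lt_trans c0 s0.
case: ce => [|qce]; first by rewrite leNgt c0.
have : c^-1 * ln q < ln e by rewrite -ln_powR ltr_ln ?posrE ?powR_gt0.
rewrite ltr_pdivrMl // => lnqc.
by rewrite ltr_ndivlMr ?ln_lt0 ?e0 // mulrC.
Qed.

Lemma le_qpow_inv (L C : \bar R) (q : R) : 0 < q < 1 -> (C < +oo)%E ->
  (forall s, 0 < s -> (C < s%:E)%E -> (L <= (q `^ s^-1)%:E)%E) ->
  (L <= qpow_inv q C)%E.
Proof.
move=> q01 Cfin LC.
have Le c e : (C <= c%:E)%E -> 0 < e -> c <= 0 \/ q `^ c^-1 < e -> (L <= e%:E)%E.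
  move=> Cc e0 ce; have [s [s0 cs] qs] := exists_powR_inv_le q01 e0 ce.
  have Cs : (C < s%:E)%E by apply: (le_lt_trans Cc); rewrite lte_fin.
  by apply: (le_trans (LC s s0 Cs)); rewrite lee_fin.
clear LC; move: Cfin Le; rewrite /qpow_inv; case: C => [c| |] // _ Le.
  case: ifPn => c0; apply/lee_addgt0Pr => e e0.
    by rewrite add0e; apply: Le e (lexx _) e0 (or_introl c0).
  rewrite -ltNge in c0; rewrite -EFinD; apply: Le _ (lexx _) _ (or_intror _); rewrite ?ltrDl //.
  by rewrite addr_gt0 ?powR_gt0 //; case/andP: q01.
apply/lee_addgt0Pr => e e0; rewrite add0e.
by apply: Le 0 e (leNye _) e0 (or_introl (lexx 0)).
Qed.

End increment_ratio.

Theorem lemma1 (R : realType) (a b : R) (h : R -> R) :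
  a < b ->
  {in `[a, b[ &, {homo h : x y / x <= y}} ->
  (ess_limsup_dratio h a b < +oo)%E ->
  forall q : R, 0 < q < 1 ->
    (limsup_right (fun x : R => ((h (a + q * (x - a)) - h a) / (h x - h a))%R) a
       <= qpow_inv q (ess_limsup_dratio h a b))%E.
Proof.
move=> _ hm Cfin q q01; apply: (le_qpow_inv q01 Cfin) => s s0 Cs.
exact: (limsup_increment_ratio_le hm s0 q01 Cs).
Qed.
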